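(* Let $r>2$, $s>2$, $a,b\in(0,1)$ satisfy $r>as$, $s>br$. Define $$\beta_1=\frac{e^{s-2}}{e^{s-2}+1},\quad \beta_2=\frac{e^{s-1}-s}{e^{s-1}-2},\quad H_2(\beta)=(1-\beta)e^{s-1}+2\beta,\quad \mathcal H_2(\beta)=\max\{H_2(\beta),s\},$$ $$\alpha_1=\frac{e^{r-2}}{e^{r-2}+1},\quad \alpha_2=\frac{e^{r-1}-r}{e^{r-1}-2},\quad H_1(\alpha)=(1-\alpha)e^{r-1}+2\alpha,\quad \mathcal H_1(\alpha)=\max\{H_1(\alpha),r\}.$$ Then: (a) If $\beta<\beta_1$, the function $y\mapsto g(\beta,0,y)$ on $[0,\infty)$ has a unique local maximum, attained at a point $\bar y(\beta)\in(1,2)$, and $g(\beta,0,\bar y(\beta))<H_2(\beta)$; if $\beta\ge\beta_1$ the function $y\mapsto g(\beta,0,y)$ is monotone increasing. (b) $H_2(\beta)<s$ whenever $\beta\in(\beta_2,1)$. (c) $g(\beta,x,y)\le \mathcal H_2(\beta)$ for all $\beta\in(0,1)$, $x\in[0,e^{r-1}]$, $y\in[0,\mathcal H_2(\beta)]$. (d) For every $H>\mathcal H_2(\beta)$, $g(\beta,x,y)\le H$ for all $\beta\in(0,1)$, $x\in[0,e^{r-1}]$, $y\in[0,H]$. (e) If $\alpha<\alpha_1$, the function $x\mapsto f(\alpha,x,0)$ has a unique local maximum, attained at a point $\bar x(\alpha)\in(1,2)$, and $f(\alpha,\bar x(\alpha),0)<H_1(\alpha)$; if $\alpha\ge\alpha_1$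 the function $x\mapsto f(\alpha,x,0)$ is monotone increasing. (f) $H_1(\alpha)<r$ whenever $\alpha\in(\alpha_2,1)$. (g) $f(\alpha,x,y)\le\mathcal H_1(\alpha)$ for all $\alpha\in(0,1)$, $y\in[0,e^{s-1}]$, $x\in[0,\mathcal H_1(\alpha)]$. (h) For every $H>\mathcal H_1(\alpha)$, $f(\alpha,x,y)\le H$ for all $\alpha\in(0,1)$, $y\in[0,e^{s-1}]$, $x\in[0,H]$.
   Context: For $\alpha,\beta\in[0,1)$ and $x,y\ge 0$ set $f(\alpha,x,y)=x[(1-\alpha)e^{r-x-ay}+\alpha]$ and $g(\beta,x,y)=y[(1-\beta)e^{s-bx-y}+\beta]$. These are the two components of the prediction-based-controlled planar Ricker map $T_{\alpha,\beta}(x,y)=(f(\alpha,x,y),g(\beta,x,y))$. *)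

From Stdlib Require Import Reals.
Open Scope R_scope.

(* Components of the prediction-based-controlled planar Ricker map. *)
Definition ricker_f (r a alpha x y : R) : R :=
  x * ((1 - alpha) * exp (r - x - a * y) + alpha).
Definition ricker_g (s b beta x y : R) : R :=
  y * ((1 - beta) * exp (s - b * x - y) + beta).

Definition beta1 (s : R) : R := exp (s - 2) / (exp (s - 2) + 1).
Definition beta2 (s : R) : R := (exp (s - 1) - s) / (exp (s - 1) - 2).
Definition H2 (s beta : R) : R := (1 - beta) * exp (s - 1) + 2 * beta.
Definition calH2 (s beta : R) : R := Rmax (H2 s beta) s.

Definition alpha1 (r : R) : R := exp (r - 2) / (exp (r - 2) + 1).
Definition alpha2 (r : R) : R := (exp (r - 1) - r) / (exp (r - 1) - 2).
Definition H1 (r alpha : R) : R := (1 - alpha) * exp (r - 1) + 2 * alpha.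
Definition calH1 (r alpha : R) : R := Rmax (H1 r alpha) r.

Definition is_local_max_nonneg (phi : R -> R) (t0 : R) : Prop :=
  0 <= t0 /\
  exists d, 0 < d /\ forall t, 0 <= t -> Rabs (t - t0) < d -> phi t <= phi t0.

Definition increasing_nonneg (phi : R -> R) : Prop :=
  forall t1 t2, 0 <= t1 -> t1 < t2 -> phi t1 < phi t2.

(* Along an axis both components reduce to the one-dimensional controlled
   Ricker map  y |-> y ((1 - beta) e^(s - y) + beta),  whose derivative is
   beta - (1 - beta) (y - 1) e^(s - y).  The hump (y - 1) e^(s - y) increases
   up to y = 2 and decreases afterwards, with maximum e^(s - 2); hence the
   derivative is positive everywhere (beta >= beta1) or changes sign at a
   first crossing point in (1, 2), which is the unique local maximum.  The
   elementary bound y e^(s - y) <= e^(s - 1) gives the value H2(beta) on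
   [0, 2]; beyond 2 the map is quasi-convex and fixes s, so it stays below
   max(H2(beta), s) on [0, s], while on [s, oo) it does not exceed y.
   Switching on the other species only lowers the exponential factor. *)

From Stdlib Require Import Reals Lra FunctionalExtensionality.
From Coquelicot Require Import Coquelicot.
Open Scope R_scope.

Lemma exp_le_mono x y : x <= y -> exp x <= exp y.
Proof. intros [h | ->]; [left; apply exp_increasing; exact h | lra]. Qed.

Lemma mul_exp_sub_le s y : y * exp (s - y) <= exp (s - 1).
Proof.
  assert (hy := exp_ineq1_le (y - 1)).
  assert (hsplit : exp (s - 1) = exp (y - 1) * exp (s - y)).
  { rewrite <- exp_plus. f_equal. ring. }
  assert (0 < exp (s - y)) by apply exp_pos.
  nra.
Qed.

Lemma derive_pos_lt (f f' : R -> R) u v : u < v ->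
  (forall c, derivable_pt_lim f c (f' c)) ->
  (forall c, u < c < v -> 0 < f' c) -> f u < f v.
Proof.
  intros huv hf hpos.
  destruct (MVT_cor2 f f' u v huv (fun c _ => hf c)) as [c [he hc]].
  specialize (hpos c hc). nra.
Qed.

Lemma derive_neg_gt (f f' : R -> R) u v : u < v ->
  (forall c, derivable_pt_lim f c (f' c)) ->
  (forall c, u < c < v -> f' c < 0) -> f v < f u.
Proof.
  intros huv hf hneg.
  destruct (MVT_cor2 f f' u v huv (fun c _ => hf c)) as [c [he hc]].
  specialize (hneg c hc). nra.
Qed.

Lemma is_local_max_nonneg_intro (phi : R -> R) t e : 0 <= t -> 0 < e ->
  (forall u, 0 <= u -> t - e < u < t -> phi u <= phi t) ->
  (forall u, t < u < t + e -> phi u <= phi t) -> is_local_max_nonneg phi t.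
Proof.
  intros ht he hleft hright. split; [exact ht |]. exists e. split; [exact he |].
  intros u hu hut. apply Rabs_def2 in hut.
  destruct (Rtotal_order u t) as [h | [-> | h]].
  - apply hleft; lra.
  - lra.
  - apply hright; lra.
Qed.

Lemma not_local_max_of_rise_right (phi : R -> R) t e : 0 < e ->
  (forall u, t < u < t + e -> phi t < phi u) -> ~ is_local_max_nonneg phi t.
Proof.
  intros he hrise [ht [d [hd hloc]]].
  set (u := t + Rmin d e / 2).
  assert (Rmin d e <= d) by apply Rmin_l.
  assert (Rmin d e <= e) by apply Rmin_r.
  assert (0 < Rmin d e) by (apply Rmin_pos; lra).
  assert (phi t < phi u) by (apply hrise; unfold u; lra).
  assert (phi u <= phi t).
  { apply hloc; unfold u; [lra |]. rewrite Rabs_right; lra. }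
  lra.
Qed.

Lemma not_local_max_of_rise_left (phi : R -> R) t e : 0 < e -> 0 <= t - e ->
  (forall u, t - e < u < t -> phi t < phi u) -> ~ is_local_max_nonneg phi t.
Proof.
  intros he hte hrise [ht [d [hd hloc]]].
  set (u := t - Rmin d e / 2).
  assert (Rmin d e <= d) by apply Rmin_l.
  assert (Rmin d e <= e) by apply Rmin_r.
  assert (0 < Rmin d e) by (apply Rmin_pos; lra).
  assert (phi t < phi u) by (apply hrise; unfold u; lra).
  assert (phi u <= phi t).
  { apply hloc; unfold u; [lra |]. rewrite Rabs_left; lra. }
  lra.
Qed.

Definition hump (s y : R) : R := (y - 1) * exp (s - y).

Lemma hump_derive s c : derivable_pt_lim (hump s) c ((2 - c) * exp (s - c)).
Proof. apply is_derive_Reals. unfold hump. auto_derive; [exact I | unfold Rminus; ring]. Qed.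

Lemma hump_increasing s u v : u < v <= 2 -> hump s u < hump s v.
Proof.
  intros huv. apply (derive_pos_lt _ (fun c => (2 - c) * exp (s - c))).
  - lra.
  - exact (hump_derive s).
  - intros c hc. assert (0 < exp (s - c)) by apply exp_pos. nra.
Qed.

Lemma hump_decreasing s u v : 2 <= u < v -> hump s v < hump s u.
Proof.
  intros huv. apply (derive_neg_gt _ (fun c => (2 - c) * exp (s - c))).
  - lra.
  - exact (hump_derive s).
  - intros c hc. assert (0 < exp (s - c)) by apply exp_pos. nra.
Qed.

Lemma hump_lt_max s c : c <> 2 -> hump s c < hump s 2.
Proof.
  intros hc. destruct (Rlt_or_le c 2).
  - apply hump_increasing; lra.
  - apply hump_decreasing; lra.
Qed.

Lemma hump_1 s : hump s 1 = 0.
Proof. unfold hump. ring. Qed.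

Lemma hump_2 s : hump s 2 = exp (s - 2).
Proof. unfold hump. ring. Qed.

Lemma lt_beta1_iff s beta : beta < beta1 s <-> beta < (1 - beta) * hump s 2.
Proof.
  rewrite hump_2. unfold beta1.
  assert (0 < exp (s - 2)) by apply exp_pos.
  unfold Rdiv. split; intros h.
  - apply (Rmult_lt_compat_r (exp (s - 2) + 1)) in h; [| lra].
    rewrite Rmult_assoc, Rinv_l in h by lra. lra.
  - apply (Rmult_lt_reg_r (exp (s - 2) + 1)); [lra |].
    rewrite Rmult_assoc, Rinv_l by lra. lra.
Qed.

Definition ricker1 (s beta y : R) : R := y * ((1 - beta) * exp (s - y) + beta).

Lemma ricker_g_axis s b beta : (fun y => ricker_g s b beta 0 y) = ricker1 s beta.
Proof.
  apply functional_extensionality. intros y. unfold ricker_g, ricker1.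
  replace (s - b * 0 - y) with (s - y) by ring. reflexivity.
Qed.

Lemma ricker_f_axis r a alpha : (fun x => ricker_f r a alpha x 0) = ricker1 r alpha.
Proof.
  apply functional_extensionality. intros x. unfold ricker_f, ricker1.
  replace (r - x - a * 0) with (r - x) by ring. reflexivity.
Qed.

Lemma ricker_g_le_ricker1 s b beta x y : 0 < b -> 0 < beta < 1 -> 0 <= x -> 0 <= y ->
  ricker_g s b beta x y <= ricker1 s beta y.
Proof.
  intros hb hbeta hx hy. unfold ricker_g, ricker1.
  assert (exp (s - b * x - y) <= exp (s - y)) by (apply exp_le_mono; nra).
  apply Rmult_le_compat_l; nra.
Qed.

Lemma ricker_f_le_ricker1 r a alpha x y : 0 < a -> 0 < alpha < 1 -> 0 <= x -> 0 <= y ->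
  ricker_f r a alpha x y <= ricker1 r alpha x.
Proof.
  intros ha halpha hx hy. unfold ricker_f, ricker1.
  assert (exp (r - x - a * y) <= exp (r - x)) by (apply exp_le_mono; nra).
  apply Rmult_le_compat_l; nra.
Qed.

Lemma H2_lt_of_beta2_lt s beta : 2 < s -> beta2 s < beta -> H2 s beta < s.
Proof.
  intros hs hbeta. unfold beta2, H2 in *.
  assert (hE : s <= exp (s - 1)) by (pose proof (exp_ineq1_le (s - 1)); lra).
  apply (Rmult_lt_compat_r (exp (s - 1) - 2)) in hbeta; [| lra].
  unfold Rdiv in hbeta. rewrite Rmult_assoc, Rinv_l in hbeta by lra.
  nra.
Qed.

Section RickerOneDim.

Variables s beta : R.
Hypothesis hbeta : 0 < beta < 1.

Let slope c := beta - (1 - beta) * hump s c.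

Lemma ricker1_derive c : derivable_pt_lim (ricker1 s beta) c (slope c).
Proof.
  apply is_derive_Reals. unfold ricker1, slope, hump.
  auto_derive; [exact I | unfold Rminus; ring].
Qed.

Lemma ricker1_lt u v : u < v ->
  (forall c, u < c < v -> (1 - beta) * hump s c < beta) ->
  ricker1 s beta u < ricker1 s beta v.
Proof.
  intros huv hc. apply (derive_pos_lt _ slope u v huv ricker1_derive).
  intros c hcuv. specialize (hc c hcuv). unfold slope. lra.
Qed.

Lemma ricker1_gt u v : u < v ->
  (forall c, u < c < v -> beta < (1 - beta) * hump s c) ->
  ricker1 s beta v < ricker1 s beta u.
Proof.
  intros huv hc. apply (derive_neg_gt _ slope u v huv ricker1_derive).
  intros c hcuv. specialize (hc c hcuv). unfold slope. lra.
Qed.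

Lemma ricker1_le_H2 y : y <= 2 -> ricker1 s beta y <= H2 s beta.
Proof.
  intros hy. unfold ricker1, H2. pose proof (mul_exp_sub_le s y). nra.
Qed.

Lemma ricker1_lt_H2 y : y < 2 -> ricker1 s beta y < H2 s beta.
Proof.
  intros hy. unfold ricker1, H2. pose proof (mul_exp_sub_le s y). nra.
Qed.

Lemma ricker1_increasing_of_beta1_le : beta1 s <= beta ->
  increasing_nonneg (ricker1 s beta).
Proof.
  intros hge.
  assert (hmax : (1 - beta) * hump s 2 <= beta).
  { apply Rnot_lt_le. rewrite <- lt_beta1_iff. lra. }
  assert (hc : forall c, c <> 2 -> (1 - beta) * hump s c < beta).
  { intros c hc. pose proof (hump_lt_max s c hc). nra. }
  intros t1 t2 _ h12.
  destruct (Rle_or_lt t2 2); [| destruct (Rle_or_lt 2 t1)].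
  - apply ricker1_lt; [lra |]. intros c ?. apply hc. lra.
  - apply ricker1_lt; [lra |]. intros c ?. apply hc. lra.
  - apply Rlt_trans with (ricker1 s beta 2);
      apply ricker1_lt; try lra; intros c ?; apply hc; lra.
Qed.

Lemma slope_crossing : beta < beta1 s ->
  exists yb, 1 < yb < 2 /\ (1 - beta) * hump s yb = beta.
Proof.
  rewrite lt_beta1_iff. intros hlt.
  assert (hcont : continuity (fun y => (1 - beta) * hump s y - beta)).
  { unfold hump. reg. }
  assert (h1 : (1 - beta) * hump s 1 - beta < 0) by (rewrite hump_1; lra).
  destruct (IVT _ 1 2 hcont ltac:(lra) h1 ltac:(lra)) as [yb [hyb hz]].
  exists yb. split; [| lra].
  split; apply Rnot_le_lt; intros ?.
  - assert (yb = 1) as -> by lra. rewrite hump_1 in hz. lra.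
  - assert (yb = 2) as -> by lra. lra.
Qed.

Section Crossing.

Variable yb : R.
Hypothesis hyb : 1 < yb < 2.
Hypothesis hcross : (1 - beta) * hump s yb = beta.

Lemma slope_pos_before_crossing c : c < yb -> (1 - beta) * hump s c < beta.
Proof. intros hc. pose proof (hump_increasing s c yb ltac:(lra)). nra. Qed.

Lemma slope_neg_after_crossing c : yb < c <= 2 -> beta < (1 - beta) * hump s c.
Proof. intros hc. pose proof (hump_increasing s yb c ltac:(lra)). nra. Qed.

Lemma ricker1_local_max_at_crossing : is_local_max_nonneg (ricker1 s beta) yb.
Proof.
  apply (is_local_max_nonneg_intro _ _ (2 - yb)); [lra | lra | |].
  - intros u _ hu. left. apply ricker1_lt; [lra |].
    intros c ?. apply slope_pos_before_crossing. lra.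
  - intros u hu. left. apply ricker1_gt; [lra |].
    intros c ?. apply slope_neg_after_crossing. lra.
Qed.

Lemma ricker1_local_max_unique t :
  is_local_max_nonneg (ricker1 s beta) t -> t = yb.
Proof.
  intros hmax. destruct (Rtotal_order t yb) as [hlt | [heq | hgt]]; [exfalso | exact heq | exfalso].
  - apply (not_local_max_of_rise_right (ricker1 s beta) t (yb - t)); [lra | | exact hmax].
    intros u hu. apply ricker1_lt; [lra |].
    intros c ?. apply slope_pos_before_crossing. lra.
  - destruct (Rle_or_lt t 2) as [ht2 | ht2].
    + apply (not_local_max_of_rise_left (ricker1 s beta) t (t - yb)); [lra | lra | | exact hmax].
      intros u hu. apply ricker1_gt; [lra |].
      intros c ?. apply slope_neg_after_crossing. lra.
    (* past the hump the slope increases, so t is a rise on one side or the other *)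
    + destruct (Rle_or_lt ((1 - beta) * hump s t) beta).
      * apply (not_local_max_of_rise_right (ricker1 s beta) t 1); [lra | | exact hmax].
        intros u hu. apply ricker1_lt; [lra |].
        intros c ?. pose proof (hump_decreasing s t c ltac:(lra)). nra.
      * apply (not_local_max_of_rise_left (ricker1 s beta) t (t - 2)); [lra | lra | | exact hmax].
        intros u hu. apply ricker1_gt; [lra |].
        intros c ?. pose proof (hump_decreasing s c t ltac:(lra)). nra.
Qed.

End Crossing.

Lemma ricker1_unique_local_max : beta < beta1 s ->
  exists yb, 1 < yb < 2 /\
    is_local_max_nonneg (ricker1 s beta) yb /\
    (forall y, is_local_max_nonneg (ricker1 s beta) y -> y = yb) /\
    ricker1 s beta yb < H2 s beta.
Proof.
  intros hlt. destruct (slope_crossing hlt) as [yb [hyb hcross]].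
  exists yb. split; [exact hyb |]. split; [| split].
  - exact (ricker1_local_max_at_crossing yb hyb hcross).
  - exact (ricker1_local_max_unique yb hyb hcross).
  - apply ricker1_lt_H2. lra.
Qed.

Lemma ricker1_quasiconvex_tail u y v : 2 <= u -> u < y < v ->
  ricker1 s beta y <= Rmax (ricker1 s beta u) (ricker1 s beta v).
Proof.
  intros hu huyv.
  destruct (Rle_or_lt (ricker1 s beta y) (ricker1 s beta u)) as [hle | hgt].
  { eapply Rle_trans; [exact hle | apply Rmax_l]. }
  destruct (MVT_cor2 _ _ u y ltac:(lra) (fun c _ => ricker1_derive c)) as [c1 [he1 hc1]].
  destruct (MVT_cor2 _ _ y v ltac:(lra) (fun c _ => ricker1_derive c)) as [c2 [he2 hc2]].
  pose proof (hump_decreasing s c1 c2 ltac:(lra)).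
  assert (slope c1 < slope c2) by (unfold slope; nra).
  assert (0 < slope c1) by nra.
  eapply Rle_trans; [| apply Rmax_r]. nra.
Qed.

Lemma ricker1_le_of_calH2_le M y : 2 < s -> calH2 s beta <= M -> 0 <= y <= M ->
  ricker1 s beta y <= M.
Proof.
  intros hs hM hy.
  assert (hH2 : H2 s beta <= M) by (eapply Rle_trans; [apply Rmax_l | exact hM]).
  assert (hsM : s <= M) by (eapply Rle_trans; [apply Rmax_r | exact hM]).
  assert (hfix : ricker1 s beta s = s).
  { unfold ricker1. rewrite Rminus_diag, exp_0. ring. }
  destruct (Rle_or_lt y 2) as [hy2 | hy2]; [| destruct (Rle_or_lt s y) as [hsy | hsy]].
  - eapply Rle_trans; [apply ricker1_le_H2 |]; lra.
  - assert (exp (s - y) <= 1) by (rewrite <- exp_0; apply exp_le_mono; lra).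
    assert ((1 - beta) * exp (s - y) + beta <= 1) by nra.
    unfold ricker1. nra.
  - eapply Rle_trans; [apply (ricker1_quasiconvex_tail 2 y s); lra |].
    rewrite hfix. apply Rmax_lub; [eapply Rle_trans; [apply ricker1_le_H2 |] |]; lra.
Qed.

End RickerOneDim.

Theorem mainTheorem1 (r s a b : R)
  (hr : 2 < r) (hs : 2 < s) (ha : 0 < a < 1) (hb : 0 < b < 1)
  (hras : r > a * s) (hsbr : s > b * r) :
  (* (a) *)
  (forall beta, 0 < beta < 1 ->
     (beta < beta1 s ->
        exists ybar, 1 < ybar < 2 /\
          is_local_max_nonneg (fun y => ricker_g s b beta 0 y) ybar /\
          (forall y, is_local_max_nonneg (fun y => ricker_g s b beta 0 y) y -> y = ybar) /\
          ricker_g s b beta 0 ybar < H2 s beta) /\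
     (beta1 s <= beta -> increasing_nonneg (fun y => ricker_g s b beta 0 y))) /\
  (* (b) *)
  (forall beta, beta2 s < beta < 1 -> H2 s beta < s) /\
  (* (c) *)
  (forall beta x y, 0 < beta < 1 -> 0 <= x <= exp (r - 1) ->
     0 <= y <= calH2 s beta -> ricker_g s b beta x y <= calH2 s beta) /\
  (* (d) *)
  (forall beta H, 0 < beta < 1 -> H > calH2 s beta ->
     forall x y, 0 <= x <= exp (r - 1) -> 0 <= y <= H -> ricker_g s b beta x y <= H) /\
  (* (e) *)
  (forall alpha, 0 < alpha < 1 ->
     (alpha < alpha1 r ->
        exists xbar, 1 < xbar < 2 /\
          is_local_max_nonneg (fun x => ricker_f r a alpha x 0) xbar /\
          (forall x, is_local_max_nonneg (fun x => ricker_f r a alpha x 0) x -> x = xbar) /\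
          ricker_f r a alpha xbar 0 < H1 r alpha) /\
     (alpha1 r <= alpha -> increasing_nonneg (fun x => ricker_f r a alpha x 0))) /\
  (* (f) *)
  (forall alpha, alpha2 r < alpha < 1 -> H1 r alpha < r) /\
  (* (g) *)
  (forall alpha x y, 0 < alpha < 1 -> 0 <= y <= exp (s - 1) ->
     0 <= x <= calH1 r alpha -> ricker_f r a alpha x y <= calH1 r alpha) /\
  (* (h) *)
  (forall alpha H, 0 < alpha < 1 -> H > calH1 r alpha ->
     forall x y, 0 <= y <= exp (s - 1) -> 0 <= x <= H -> ricker_f r a alpha x y <= H).
Proof.
  (* alpha1, alpha2, H1 and calH1 unfold to beta1, beta2, H2 and calH2 *)
  split; [| split; [| split; [| split; [| split; [| split; [| split]]]]]].
  - intros beta hbeta. split.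
    + intros hlt. pose proof (ricker1_unique_local_max s beta hbeta hlt) as hmax.
      rewrite <- (ricker_g_axis s b beta) in hmax. exact hmax.
    + rewrite ricker_g_axis. exact (ricker1_increasing_of_beta1_le s beta hbeta).
  - intros beta hbeta. apply H2_lt_of_beta2_lt; lra.
  - intros beta x y hbeta hx hy. eapply Rle_trans; [apply ricker_g_le_ricker1; lra |].
    apply ricker1_le_of_calH2_le; lra.
  - intros beta M hbeta hM x y hx hy. eapply Rle_trans; [apply ricker_g_le_ricker1; lra |].
    apply ricker1_le_of_calH2_le; lra.
  - intros alpha halpha. split.
    + intros hlt. pose proof (ricker1_unique_local_max r alpha halpha hlt) as hmax.
      rewrite <- (ricker_f_axis r a alpha) in hmax. exact hmax.
    + rewrite ricker_f_axis. exact (ricker1_increasing_of_beta1_le r alpha halpha).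
  - intros alpha halpha. exact (H2_lt_of_beta2_lt r alpha hr (proj1 halpha)).
  - intros alpha x y halpha hy hx. change (calH1 r alpha) with (calH2 r alpha) in *.
    eapply Rle_trans; [apply ricker_f_le_ricker1; lra |].
    apply ricker1_le_of_calH2_le; lra.
  - intros alpha M halpha hM x y hy hx. change (calH1 r alpha) with (calH2 r alpha) in *.
    eapply Rle_trans; [apply ricker_f_le_ricker1; lra |].
    apply ricker1_le_of_calH2_le; lra.
Qed.
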